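(* Let $k,\ell\ge2$ be integers. The sequence $(g_{k,\ell}(n))_{n\ge0}$ is $k$-synchronized if and only if $k=\ell$.
   Context: For integers $k,\ell\ge 2$ define $g_{k,\ell}(0)=1$ and $g_{k,\ell}(n)=1+\ell^{\lfloor \log_k n\rfloor}$ for $n>0$. A sequence $(f(n))_{n\ge0}$ of natural numbers is $k$-synchronized if there is a deterministic finite automaton accepting exactly the set of words $(n,m)_k$ with $m=f(n)$, where $(n,m)_k$ denotes the word over the alphabet of digit pairs obtained by writing $n$ and $m$ in base $k$, padding the shorter representation with leading zeros, and reading the digits in parallel. *)

From mathcomp Require Import all_boot.
Set Implicit Arguments. Unset Strict Implicit. Unset Printing Implicit Defensive.

(* Reversed base-k digits (least significant first); [n] serves as fuel,
   which suffices for k >= 2. The canonical representation of 0 is the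
   empty word; no leading zeros otherwise. *)
Fixpoint rdigits (fuel k n : nat) : seq nat :=
  match fuel with
  | 0 => [::]
  | f.+1 => if n == 0 then [::] else n %% k :: rdigits f k (n %/ k)
  end.

Definition base_rep (k n : nat) : seq nat := rev (rdigits n k n).

Definition pad (L : nat) (w : seq nat) : seq nat := nseq (L - size w) 0 ++ w.

Definition pair_rep (k n m : nat) : seq (nat * nat) :=
  let a := base_rep k n in
  let b := base_rep k m in
  let L := maxn (size a) (size b) in
  zip (pad L a) (pad L b).

Record dfa (A : Type) := DFA {
  state : finType;
  start : state;
  delta : state -> A -> state;
  final : pred state
}.

Definition accepts (A : Type) (D : dfa A) (w : seq A) : bool :=
  @final A D (foldl (@delta A D) (@start A D) w).

Definition digit_pair (k : nat) := ('I_k * 'I_k)%type.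

Definition word_val (k : nat) (w : seq (digit_pair k)) : seq (nat * nat) :=
  map (fun p : digit_pair k => (nat_of_ord p.1, nat_of_ord p.2)) w.

Definition k_synchronized (k : nat) (f : nat -> nat) : Prop :=
  exists D : dfa (digit_pair k),
    forall w : seq (digit_pair k),
      accepts D w <-> exists n, word_val w = pair_rep k n (f n).

Definition g (k l n : nat) : nat :=
  if n == 0 then 1 else 1 + l ^ trunc_log k n.

Example base_rep_test : base_rep 2 6 = [:: 1; 1; 0]. Proof. by []. Qed.
Example pair_rep_test : pair_rep 2 2 5 = [:: (0,1); (1,0); (0,1)]. Proof. by []. Qed.
Example g_test : g 2 3 5 = 10. Proof. by []. Qed.

From mathcomp Require Import all_boot zify.
Set Implicit Arguments. Unset Strict Implicit. Unset Printing Implicit Defensive.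

(* For k <> l the lengths of (n)_k and (g(n))_k drift apart along n = k^t:
   when k < l the representation of n carries many leading zeros in the word
   (n, g(n))_k, when l < k that of g(n) does.  Pumping down inside this zero
   padding, an automaton with fewer states than the padding would accept a
   shorter word whose padded component keeps its value; for k < l that value
   is n itself, for l < k it is g(n), which determines the length of (n)_k.
   Either way the shorter word is not of the form (m, g(m))_k.  For k = l the
   word (n, g(n))_k has the shape (a,1)(x,0)...(x,0)(y,1) once n >= k, and a
   seven-state automaton recognises these words together with the few words
   for n < k. *)

Fixpoint nat_of_rdigits (k : nat) (r : seq nat) : nat :=
  if r is d :: r' then d + k * nat_of_rdigits k r' else 0.

Definition nat_of_digits (k : nat) (s : seq nat) : nat := nat_of_rdigits k (rev s).

Definition digits_lt (k : nat) (s : seq nat) : bool := all (fun d => d < k) s.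

Lemma nat_of_rdigits_cat k r1 r2 :
  nat_of_rdigits k (r1 ++ r2) = nat_of_rdigits k r1 + k ^ size r1 * nat_of_rdigits k r2.
Proof. by elim: r1 => [|d r IH] /=; rewrite ?expn0 ?expnS ?IH; lia. Qed.

Lemma nat_of_rdigits_nseq0 k n : nat_of_rdigits k (nseq n 0) = 0.
Proof. by elim: n => //= n ->; lia. Qed.

Lemma nat_of_digits_cat k s t :
  nat_of_digits k (s ++ t) = nat_of_digits k s * k ^ size t + nat_of_digits k t.
Proof. by rewrite /nat_of_digits rev_cat nat_of_rdigits_cat size_rev; lia. Qed.

Lemma nat_of_digits_nseq0 k n s : nat_of_digits k (nseq n 0 ++ s) = nat_of_digits k s.
Proof. by rewrite nat_of_digits_cat /nat_of_digits rev_nseq nat_of_rdigits_nseq0. Qed.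

Lemma digits_lt_nseq0 k n s : 0 < k -> digits_lt k (nseq n 0 ++ s) = digits_lt k s.
Proof. by move=> k_gt0; rewrite /digits_lt all_cat all_nseq k_gt0 orbT. Qed.

Lemma nat_of_digits1 k a : nat_of_digits k [:: a] = a.
Proof. by rewrite /nat_of_digits /=; lia. Qed.

Section BaseRep.

Variable k : nat.
Hypothesis k_gt1 : 1 < k.

Lemma rdigits0 f : rdigits f k 0 = [::].
Proof. by case: f. Qed.

Lemma rdigitsS f n : 0 < n -> rdigits f.+1 k n = n %% k :: rdigits f k (n %/ k).
Proof. by move=> /= n_gt0; rewrite ifN // -lt0n. Qed.

Lemma rdigitsK f n : n <= f -> nat_of_rdigits k (rdigits f k n) = n.
Proof.
elim: f n => [|f IH] n n_le; first by have -> : n = 0 by lia.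
have [->|n_gt0] := posnP n; first by rewrite rdigits0.
rewrite rdigitsS //= IH; last by have := ltn_Pdiv k_gt1 n_gt0; lia.
by rewrite [in RHS](divn_eq n k); lia.
Qed.

Lemma rdigits_lt f n : digits_lt k (rdigits f k n).
Proof.
elim: f n => [|f IH] n //=.
by case: (n == 0) => //=; rewrite ltn_pmod ?IH //; lia.
Qed.

Lemma size_rdigits_leq f n s : n <= f -> (size (rdigits f k n) <= s) = (n < k ^ s).
Proof.
have k_gt0 : 0 < k by lia.
elim: f n s => [|f IH] n s n_le.
  have -> : n = 0 by lia.
  by rewrite expn_gt0 k_gt0.
have [->|n_gt0] := posnP n; first by rewrite rdigits0 expn_gt0 k_gt0.
rewrite rdigitsS //; case: s => [|s] /=; first by rewrite expn0; lia.
rewrite ltnS IH; last by have := ltn_Pdiv k_gt1 n_gt0; lia.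
by rewrite ltn_divLR ?expnSr.
Qed.

Lemma rdigits_last f n : 0 < n -> n <= f ->
  exists r a, rdigits f k n = rcons r a /\ 0 < a.
Proof.
elim: f n => [|f IH] n n_gt0 n_le; first by lia.
rewrite rdigitsS //; have [q0|q_gt0] := posnP (n %/ k).
  exists [::], (n %% k); rewrite q0 rdigits0; split=> //.
  by move: (divn_eq n k); rewrite q0; lia.
have [|r [a [-> a_gt0]]] := IH (n %/ k) q_gt0; first by have := ltn_Pdiv k_gt1 n_gt0; lia.
by exists (n %% k :: r), a.
Qed.

Lemma nat_of_rdigits_rcons_gt0 r a : 0 < a -> 0 < nat_of_rdigits k (rcons r a).
Proof.
move=> a_gt0; rewrite -cats1 nat_of_rdigits_cat /=.
have : 0 < k ^ size r by rewrite expn_gt0; lia.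
nia.
Qed.

Lemma nat_of_rdigitsK r a f : digits_lt k (rcons r a) -> 0 < a ->
  nat_of_rdigits k (rcons r a) <= f -> rdigits f k (nat_of_rdigits k (rcons r a)) = rcons r a.
Proof.
elim: r f => [|d r IH] f /=.
  rewrite andbT muln0 addn0 => a_lt a_gt0; case: f => [|f] a_le; first by lia.
  by rewrite rdigitsS // modn_small // divn_small // rdigits0.
move=> /andP [d_lt r_lt] a_gt0 le_f.
have x_gt0 := nat_of_rdigits_rcons_gt0 r a_gt0.
case: f le_f => [|f] le_f; first by lia.
rewrite rdigitsS; last by lia.
rewrite mulnC addnC modnMDl divnMDl; last by lia.
by rewrite modn_small // divn_small // addn0 IH //; nia.
Qed.

Lemma base_rep_lt n : digits_lt k (base_rep k n).
Proof. by rewrite /digits_lt all_rev; apply: rdigits_lt. Qed.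

Lemma base_repK n : nat_of_digits k (base_rep k n) = n.
Proof. by rewrite /nat_of_digits /base_rep revK rdigitsK. Qed.

Lemma size_base_rep_leq n s : (size (base_rep k n) <= s) = (n < k ^ s).
Proof. by rewrite size_rev size_rdigits_leq. Qed.

Lemma size_base_rep n : 0 < n -> size (base_rep k n) = (trunc_log k n).+1.
Proof.
move=> n_gt0; apply/eqP; rewrite eqn_leq size_base_rep_leq trunc_log_ltn //=.
by rewrite ltnNge size_base_rep_leq -leqNgt trunc_logP.
Qed.

Lemma base_rep_head n : 0 < n -> exists a s, base_rep k n = a :: s /\ 0 < a.
Proof.
move=> n_gt0; have [r [a [rE a_gt0]]] := @rdigits_last n n n_gt0 (leqnn n).
by exists a, (rev r); rewrite /base_rep rE rev_rcons.
Qed.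

Lemma nat_of_digitsK a s : 0 < a -> digits_lt k (a :: s) ->
  base_rep k (nat_of_digits k (a :: s)) = a :: s.
Proof.
move=> a_gt0 as_lt; rewrite /base_rep /nat_of_digits rev_cons nat_of_rdigitsK //.
- by rewrite rev_rcons revK.
- by rewrite -rev_cons /digits_lt all_rev.
Qed.

Lemma base_rep_digit a : 0 < a < k -> base_rep k a = [:: a].
Proof.
move=> /andP [a_gt0 a_lt]; have := @nat_of_digitsK a [::] a_gt0.
by rewrite nat_of_digits1 /digits_lt /= a_lt; apply.
Qed.

Lemma size_pad L w : size w <= L -> size (pad L w) = L.
Proof. by move=> le_wL; rewrite /pad size_cat size_nseq subnK. Qed.

Lemma size_pair_rep n m :
  size (pair_rep k n m) = maxn (size (base_rep k n)) (size (base_rep k m)).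
Proof. by rewrite /pair_rep size_zip !size_pad ?leq_maxl ?leq_maxr // minnn. Qed.

Lemma unzip1_pair_rep n m :
  unzip1 (pair_rep k n m) = nseq (size (pair_rep k n m) - size (base_rep k n)) 0 ++ base_rep k n.
Proof. by rewrite size_pair_rep /pair_rep unzip1_zip // !size_pad ?leq_maxl ?leq_maxr. Qed.

Lemma unzip2_pair_rep n m :
  unzip2 (pair_rep k n m) = nseq (size (pair_rep k n m) - size (base_rep k m)) 0 ++ base_rep k m.
Proof. by rewrite size_pair_rep /pair_rep unzip2_zip // !size_pad ?leq_maxl ?leq_maxr. Qed.

Lemma nat_of_digits_unzip1_pair_rep n m : nat_of_digits k (unzip1 (pair_rep k n m)) = n.
Proof. by rewrite unzip1_pair_rep nat_of_digits_nseq0 base_repK. Qed.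

Lemma nat_of_digits_unzip2_pair_rep n m : nat_of_digits k (unzip2 (pair_rep k n m)) = m.
Proof. by rewrite unzip2_pair_rep nat_of_digits_nseq0 base_repK. Qed.

Lemma pair_rep_eq_size n m : size (base_rep k n) = size (base_rep k m) ->
  pair_rep k n m = zip (base_rep k n) (base_rep k m).
Proof. by move=> eq_size; rewrite /pair_rep /pad eq_size maxnn subnn. Qed.

Lemma pair_rep_lt n m : all (fun p => (p.1 < k) && (p.2 < k)) (pair_rep k n m).
Proof.
rewrite -[pair_rep k n m]zip_unzip.
have : digits_lt k (unzip1 (pair_rep k n m)) /\ digits_lt k (unzip2 (pair_rep k n m)).
  by rewrite unzip1_pair_rep unzip2_pair_rep !digits_lt_nseq0 ?base_rep_lt; lia.
elim: (unzip1 _) (unzip2 _) => [|x s IH] [|y t] //= [/andP [-> s_lt] /andP [-> t_lt]].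
exact: IH.
Qed.

End BaseRep.

Lemma word_val_surj k (W : seq (nat * nat)) :
  all (fun p => (p.1 < k) && (p.2 < k)) W -> exists w : seq (digit_pair k), word_val w = W.
Proof.
elim: W => [|[x y] W IH] /=; first by exists [::].
move=> /andP [/andP [x_lt y_lt] /IH [w wE]].
by exists ((Ordinal x_lt, Ordinal y_lt) :: w); rewrite /= wE.
Qed.

Lemma word_val_lt k (w : seq (digit_pair k)) :
  all (fun p => (p.1 < k) && (p.2 < k)) (word_val w).
Proof. by rewrite all_map; apply/allP => p _ /=; rewrite !ltn_ord. Qed.

Lemma dfa_pump_down (A : Type) (D : dfa A) (u x : seq A) :
  #|state D| <= size u -> accepts D (u ++ x) ->
  exists i j, i < j <= size u /\ accepts D (take i u ++ drop j u ++ x).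
Proof.
move=> card_le acc.
pose run (t : 'I_(size u).+1) := foldl (@delta A D) (@start A D) (take t u).
have /injectivePn [i [j neq_ij run_ij]] : ~~ injectiveb run.
  by apply/injectiveP => /leq_card; rewrite card_ord; lia.
wlog lt_ij : i j neq_ij run_ij / i < j.
  move=> hwlog; have [lt_ij|lt_ji|eq_ij] := ltngtP i j; first exact: (hwlog i j).
  - by apply: (hwlog j i _ (esym run_ij) lt_ji); rewrite eq_sym.
  - by move: neq_ij; rewrite (val_inj eq_ij) eqxx.
case: i j neq_ij run_ij lt_ij => [i i_lt] [j j_lt] _; rewrite /run /= => run_ij lt_ij.
exists i, j; split; first by rewrite lt_ij -ltnS.
by rewrite /accepts foldl_cat run_ij -foldl_cat catA cat_take_drop.
Qed.

(* The deleted letters lie in the zero padding of the component [pr], so the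
   value of that component survives the pumping. *)
Lemma synchronized_pump_down k (f : nat -> nat) (D : dfa (digit_pair k))
    (pr : nat * nat -> nat) n R s :
  1 < k -> (forall w, accepts D w <-> exists n, word_val w = pair_rep k n (f n)) ->
  #|state D| <= R -> map pr (pair_rep k n (f n)) = nseq R 0 ++ s ->
  exists2 n', size (pair_rep k n' (f n')) < size (pair_rep k n (f n))
            & nat_of_digits k (map pr (pair_rep k n' (f n'))) = nat_of_digits k s.
Proof.
move=> k_gt1 D_graph card_le prE.
have [w wE] := word_val_surj (pair_rep_lt k_gt1 n (f n)).
have prwE : map pr (word_val w) = nseq R 0 ++ s by rewrite wE.
have R_le : R <= size w.
  by move/(congr1 size): prwE; rewrite !size_map size_cat size_nseq => ->; apply: leq_addr.
have acc : accepts D (take R w ++ drop R w) by rewrite cat_take_drop; apply/D_graph; exists n.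
have card_le' : #|state D| <= size (take R w) by rewrite size_takel.
have [i [j [/andP [lt_ij le_j] acc']]] := dfa_pump_down card_le' acc.
rewrite size_takel // in le_j.
have [n' n'E] := (D_graph _).1 acc'.
exists n'; rewrite -n'E.
- rewrite -wE /word_val !size_map !size_cat !size_drop !size_takel //; lia.
- rewrite /word_val !map_cat !map_drop !map_take -/(word_val w) prwE.
  rewrite take_size_cat ?drop_size_cat ?size_nseq // take_nseq ?drop_nseq; last lia.
  by rewrite !nat_of_digits_nseq0.
Qed.

Lemma bernoulli_expn a m : a ^ m * (a + m) <= a * (a + 1) ^ m.
Proof.
elim: m => [|m IH]; first by rewrite !expn0; lia.
have : a ^ m * (a + m) * (a + 1) <= a * (a + 1) ^ m * (a + 1) by rewrite leq_mul2r IH orbT.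
rewrite !expnS; nia.
Qed.

Lemma expn_gap a b C : 0 < a -> a < b -> exists t, C * a ^ t <= b ^ t.
Proof.
move=> a_gt0 lt_ab; exists (a * C.+1).
have := bernoulli_expn a (a * C.+1).
have -> : a + a * C.+1 = a * C.+2 by lia.
rewrite mulnCA leq_pmul2l // => le_succ.
have le_b : (a + 1) ^ (a * C.+1) <= b ^ (a * C.+1) by rewrite leq_exp2r ?muln_gt0 ?a_gt0 // addn1.
apply: leq_trans le_b; apply: leq_trans le_succ; rewrite mulnC leq_mul2l; lia.
Qed.

Lemma g_expn k l t : 1 < k -> g k l (k ^ t) = 1 + l ^ t.
Proof. by move=> k_gt1; rewrite /g ifN ?trunc_expnK // -lt0n expn_gt0; lia. Qed.

Lemma g_eq_size_base_rep k l n n' : 1 < k -> 1 < l -> g k l n = g k l n' ->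
  size (base_rep k n) = size (base_rep k n').
Proof.
move=> k_gt1 l_gt1; rewrite /g.
have l_pos t : 0 < l ^ t by rewrite expn_gt0; lia.
case: (posnP n) (posnP n') => [->|n_gt0] [->|n'_gt0] //=.
- by have := l_pos (trunc_log k n'); lia.
- by have := l_pos (trunc_log k n); lia.
move=> /eqP; rewrite eqn_add2l eqn_exp2l // => /eqP eq_log.
by rewrite !size_base_rep // eq_log.
Qed.

Lemma exists_g_long k l N : 1 < k -> k < l ->
  exists n, size (base_rep k n) + N < size (base_rep k (g k l n)).
Proof.
move=> k_gt1 lt_kl; have [|t le_t] := @expn_gap k l (k ^ N.+1) _ lt_kl; first by lia.
exists (k ^ t); rewrite g_expn // size_base_rep ?expn_gt0 ?trunc_expnK //; last by lia.
rewrite ltnNge size_base_rep_leq // -leqNgt addSn -addnS addnC expnD.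
by apply: leq_trans le_t _; rewrite leq_addl.
Qed.

Lemma exists_g_short k l N : 1 < l -> l < k ->
  exists n, size (base_rep k (g k l n)) + N < size (base_rep k n).
Proof.
move=> l_gt1 lt_lk; have [|t le_t] := @expn_gap l k (2 * l ^ N.+1) _ lt_lk; first by lia.
have k_gt1 : 1 < k by lia.
exists (k ^ (N.+1 + t)); rewrite g_expn //.
rewrite [X in _ < X]size_base_rep ?expn_gt0 ?trunc_expnK //; last by lia.
suff : size (base_rep k (1 + l ^ (N.+1 + t))) <= t.+1 by lia.
rewrite size_base_rep_leq // expnD (expnS k t).
have : 0 < l ^ N.+1 * l ^ t by rewrite muln_gt0 !expn_gt0; lia.
nia.
Qed.

Lemma synchronized_g_eq k l : 1 < k -> 1 < l -> k_synchronized k (g k l) -> k = l.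
Proof.
move=> k_gt1 l_gt1 [D D_graph]; case: (ltngtP k l) => // [lt_kl|lt_lk]; exfalso.
- have [n long_n] := exists_g_long #|state D| k_gt1 lt_kl.
  have [|n' lt_size] := synchronized_pump_down k_gt1 D_graph _ (unzip1_pair_rep k n _).
    by rewrite size_pair_rep; lia.
  by rewrite nat_of_digits_unzip1_pair_rep // base_repK // => n'E; rewrite n'E ltnn in lt_size.
- have [n short_n] := exists_g_short #|state D| l_gt1 lt_lk.
  have [|n' lt_size] := synchronized_pump_down k_gt1 D_graph _ (unzip2_pair_rep k n _).
    by rewrite size_pair_rep; lia.
  rewrite nat_of_digits_unzip2_pair_rep // base_repK // => g_eq.
  by move: lt_size; rewrite !size_pair_rep g_eq (g_eq_size_base_rep k_gt1 l_gt1 g_eq) ltnn.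
Qed.

(* States of the automaton for (n, g_{k,k}(n))_k: 1 after (0,1), i.e. n = 0;
   2 after (0,1)(1,0), i.e. k = 2 and n = 1; 3 after a one-digit n, where
   g = 2 is a digit when k > 2; 4 inside (a,1)(x,0)...(x,0), awaiting the
   final letter (y,1); 5 after that letter; 6 is a sink. *)
Definition gkk_step (k s : nat) (p : nat * nat) : nat :=
  match s with
  | 0 => match p with (0, 1) => 1 | (_.+1, 2) => 3 | (_.+1, 1) => 4 | _ => 6 end
  | 1 => if (k == 2) && (p == (1, 0)) then 2 else 6
  | 4 => match p.2 with 0 => 4 | 1 => 5 | _ => 6 end
  | _ => 6
  end.

Definition gkk_accepting : seq nat := [:: 1; 2; 3; 5].

Lemma gkk_step_lt k s p : gkk_step k s p < 7.
Proof.
by case: s p => [|[|[|[|[|s]]]]] [[|x] [|[|[|y]]]] //=; case: ifP.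
Qed.

Definition gkk_dfa (k : nat) : dfa (digit_pair k) :=
  DFA (ord0 : 'I_7) (fun s p => inord (gkk_step k s (val p.1, val p.2)))
    (fun s => val s \in gkk_accepting).

Lemma gkk_dfa_run k (s : 'I_7) w :
  val (foldl (@delta _ (gkk_dfa k)) s w) = foldl (gkk_step k) s (word_val w).
Proof. by elim: w s => [|p w IH] s //=; rewrite IH inordK ?gkk_step_lt. Qed.

Lemma accepts_gkk_dfa k w :
  accepts (gkk_dfa k) w = (foldl (gkk_step k) 0 (word_val w) \in gkk_accepting).
Proof. by rewrite /accepts /= gkk_dfa_run. Qed.

Lemma gkk_run_sink k W : foldl (gkk_step k) 6 W = 6.
Proof. by elim: W. Qed.

Lemma gkk_run4P k W : foldl (gkk_step k) 4 W \in gkk_accepting <->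
  exists mid y, W = rcons mid (y, 1) /\ all (fun p => p.2 == 0) mid.
Proof.
split.
- elim: W => [|[x [|[|y]]] W IH] //=; last by rewrite gkk_run_sink.
    move=> /IH [mid [y [-> mid0]]].
    by exists ((x, 0) :: mid), y.
  case: W {IH} => [|p W] /=; first by exists [::], x.
  by rewrite gkk_run_sink.
- move=> [mid [y [-> mid0]]]; rewrite foldl_rcons.
  suff -> : foldl (gkk_step k) 4 mid = 4 by [].
  by elim: mid mid0 => [|[x z] mid IH] //= /andP [/eqP /= -> /IH].
Qed.

Lemma pair_rep_gkk0 k : 1 < k -> pair_rep k 0 (g k k 0) = [:: (0, 1)].
Proof. by move=> k_gt1; rewrite /pair_rep /g /= modn_small. Qed.

Lemma g_digit k l a : 1 < k -> 0 < a < k -> g k l a = 2.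
Proof.
move=> k_gt1 /andP [a_gt0 a_lt]; rewrite /g ifN -?lt0n //.
suff /eqP -> : trunc_log k a == 0 by [].
by rewrite trunc_log_eq0; apply/orP; right; lia.
Qed.

Lemma pair_rep_gkk_digit k a : 2 < k -> 0 < a < k -> pair_rep k a (g k k a) = [:: (a, 2)].
Proof.
move=> k_gt2 a_digit; rewrite g_digit //; last by lia.
by rewrite /pair_rep !base_rep_digit //; lia.
Qed.

Lemma pair_rep_gkk_long k a X y : 1 < k -> 0 < a -> digits_lt k (a :: rcons X y) ->
  pair_rep k (nat_of_digits k (a :: rcons X y)) (g k k (nat_of_digits k (a :: rcons X y)))
  = (a, 1) :: rcons (zip X (nseq (size X) 0)) (y, 1).
Proof.
move=> k_gt1 a_gt0 digits; set n := nat_of_digits k _.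
have nE : base_rep k n = a :: rcons X y by rewrite nat_of_digitsK.
have n_gt0 : 0 < n by rewrite lt0n; apply: contraPneq nE => ->.
have log_n : trunc_log k n = (size X).+1.
  by have := size_base_rep k_gt1 n_gt0; rewrite nE /= size_rcons; case.
have gE : g k k n = nat_of_digits k (1 :: rcons (nseq (size X) 0) 1).
  rewrite /g ifN -?lt0n // log_n -cats1 -cat1s nat_of_digits_cat nat_of_digits_nseq0.
  by rewrite !nat_of_digits1 size_cat size_nseq /= addn1 mul1n addn1.
have gnE : base_rep k (g k k n) = 1 :: rcons (nseq (size X) 0) 1.
  by rewrite gE nat_of_digitsK //= /digits_lt /= all_rcons all_nseq; lia.
rewrite pair_rep_eq_size // nE gnE /= ?zip_rcons ?size_rcons ?size_nseq //.
Qed.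

Lemma gkk_sound k W : 1 < k -> all (fun p => (p.1 < k) && (p.2 < k)) W ->
  foldl (gkk_step k) 0 W \in gkk_accepting -> exists n, W = pair_rep k n (g k k n).
Proof.
move=> k_gt1; case: W => [|[[|x] [|[|[|y]]]] W] //=; try by rewrite gkk_run_sink.
- case: W => [|p W] /= W_lt; first by exists 0; rewrite pair_rep_gkk0.
  case: ifP => [/andP [/eqP k2 /eqP ->]|_]; last by rewrite gkk_run_sink.
  case: W W_lt => [|q W] /=; last by rewrite gkk_run_sink.
  by subst k; exists 1.
- move=> /andP [/andP [x_lt _] W_lt] /gkk_run4P [mid [y [WE mid0]]].
  exists (nat_of_digits k (x.+1 :: rcons (unzip1 mid) y)).
  rewrite pair_rep_gkk_long //; last first.
    move: W_lt; rewrite WE /digits_lt /= x_lt !all_rcons all_map => /andP [/andP [-> _]].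
    by apply: sub_all => p /andP [].
  have -> : nseq (size (unzip1 mid)) 0 = unzip2 mid.
    by elim: mid mid0 {WE W_lt} => [|[x' z] mid IH] //= /andP [/eqP /= -> /IH ->].
  by rewrite zip_unzip WE.
- case: W => [|p W] /=; last by rewrite gkk_run_sink.
  rewrite andbT => /andP [x_lt two_lt] _; exists x.+1.
  by rewrite pair_rep_gkk_digit.
Qed.

Lemma gkk_complete k n : 1 < k ->
  foldl (gkk_step k) 0 (pair_rep k n (g k k n)) \in gkk_accepting.
Proof.
move=> k_gt1; have [->|n_gt0] := posnP n; first by rewrite pair_rep_gkk0.
have [lt_nk|le_kn] := ltnP n k.
  have [k2|k_gt2] := eqVneq k 2.
    by subst k; have -> : n = 1 by lia.
  rewrite pair_rep_gkk_digit ?n_gt0 //; first by case: n n_gt0 lt_nk.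
  by rewrite ltn_neqAle eq_sym k_gt2.
have [a [s [nE a_gt0]]] := base_rep_head k_gt1 n_gt0.
case/lastP: s nE => [|X y] nE.
  have := size_base_rep k_gt1 n_gt0; rewrite nE /=.
  have : 1 <= trunc_log k n by apply: trunc_log_max; rewrite ?expn1.
  lia.
have -> : n = nat_of_digits k (a :: rcons X y) by rewrite -nE base_repK.
rewrite pair_rep_gkk_long -?nE ?base_rep_lt //.
case: a a_gt0 {nE} => //= a _; apply/gkk_run4P; exists (zip X (nseq (size X) 0)), y.
by split=> //; elim: X.
Qed.

Lemma synchronized_gkk k : 1 < k -> k_synchronized k (g k k).
Proof.
move=> k_gt1; exists (gkk_dfa k) => w; rewrite accepts_gkk_dfa; split.
- exact/gkk_sound/word_val_lt.
- by move=> [n ->]; apply: gkk_complete.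
Qed.

Theorem proposition7 (k l : nat) :
  2 <= k -> 2 <= l -> (k_synchronized k (g k l) <-> k = l).
Proof.
move=> k_gt1 l_gt1; split; first exact: synchronized_g_eq.
by move=> <-; apply: synchronized_gkk.
Qed.
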